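(* Let $q$ be even and let $\mathcal U$ be a non-classical orthogonal Buekenhout–Metz unital with respect to $\ell_\infty$ in $\mathrm{PG}(2,q^2)$. Let $P$ be a point with $P\notin\mathcal U\cup\ell_\infty$. Then (1) the points of $\mathrm{pedal}(P)$ lie on the lines of a Baer pencil whose vertex is a point of $\ell_\infty$, and (2) $\mathrm{pedal}(P)$ is an arc.
   Context: Points of $\mathrm{PG}(2,q^2)$ have homogeneous coordinates $(x,y,z)$; $\ell_\infty$ is the line $z=0$. For $q$ even, an orthogonal Buekenhout–Metz unital with respect to $\ell_\infty$ is (up to a collineation fixing $\ell_\infty$) a set $\mathcal U_{\alpha\beta}=\{(x,\alpha x^2+\beta x^{q+1}+r,1): x\in\mathbb{F}_{q^2}, r\in\mathbb{F}_q\}\cup\{(0,1,0)\}$ where $\alpha,\beta\in\mathbb{F}_{q^2}$, $\beta\notin\mathbb{F}_q$ and $\alpha^{q+1}/(\beta^q+\beta)^2$ has absolute trace $0$ in $\mathbb{F}_q$ (originally defined as the unitals corresponding to an elliptic cone containing a spread line in the Bruck–Bose representation in $\mathrm{PG}(4,q)$ with respect to $\ell_\infty$); it is non-classical iff $\alpha\neq0$. A unital is a set of $q^3+1$ points meeting every line in $1$ or $q+1$ points; a tangent is a line meeting it in exactly one point. For $P$ not on the unital, the $q+1$ tangents through $P$ meet the unital in the feet of $P$, forming $\mathrm{pedal}(P)$. An arc is a point set meeting every line in at most $2$ points. A Baer subline is a set of $q+1$ points of a line projectively equivalent to $\{(a,b,0):(a,b)\in\mathbb{F}_q^2\setminus\{0\}\}$;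 a Baer pencil is the set of $q+1$ lines joining a vertex point to the points of a Baer subline. *)

(* Projective plane PG(2, F) over a finite field F with
   #|F| = q^2; points are nonzero row vectors of 'rV[F]_3 taken up to
   nonzero scalars (all point sets below are scale-invariant predicates),
   lines are given by nonzero coefficient vectors. *)
From HB Require Import structures.
From mathcomp Require Import all_boot all_order all_algebra.
Set Implicit Arguments. Unset Strict Implicit. Unset Printing Implicit Defensive.
Import Order.TTheory GRing.Theory.
Local Open Scope ring_scope.

Section PG.
Variables (F : finFieldType) (q : nat).

Definition vec := 'rV[F]_3.

Definition pt (x y z : F) : vec := \row_(j < 3) nth 0 [:: x; y; z] j.

Definition projeq (u v : vec) : Prop := exists k : F, k != 0 /\ u = k *: v.

Definition inFq (x : F) : bool := x ^+ q == x.

(* absolute trace F_q -> F_2, q = 2^h, h = logn 2 q *)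
Definition abstrace (t : F) : F := \sum_(i < logn 2 q) t ^+ (2 ^ i).

Definition on_linf (v : vec) : bool := v 0 2%:R == 0.

Definition on_line (c v : vec) : bool := \sum_(i < 3) c 0 i * v 0 i == 0.

Definition det3 (u v w : vec) : F :=
  \det (\matrix_(i < 3, j < 3)
          (if (i : nat) == 0%N then u 0 j else if (i : nat) == 1%N then v 0 j else w 0 j)).

Definition U_ab (alpha beta : F) (v : vec) : Prop :=
  (exists x r : F, inFq r /\
     projeq v (pt x (alpha * x ^+ 2 + beta * x ^+ q.+1 + r) 1))
  \/ projeq v (pt 0 1 0).

Definition orthBM_params (alpha beta : F) : Prop :=
  ~~ inFq beta /\
  abstrace (alpha ^+ q.+1 / (beta ^+ q + beta) ^+ 2) = 0.

(* collineation of PG(2,F): v |-> v^sigma A  (element of PGammaL(3,F)) *)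
Definition collin (sigma : {rmorphism F -> F}) (A : 'M[F]_3) (v : vec) : vec :=
  map_mx sigma v *m A.

Definition fixes_linf (f : vec -> vec) : Prop :=
  forall v, v != 0 -> on_linf v -> on_linf (f v).

Definition nonclassical_orthBM (U : vec -> Prop) : Prop :=
  exists (alpha beta : F) (sigma : {rmorphism F -> F}) (A : 'M[F]_3),
    orthBM_params alpha beta /\ alpha != 0 /\ A \in unitmx /\
    fixes_linf (collin sigma A) /\
    forall w, U w <-> exists v, U_ab alpha beta v /\ w = collin sigma A v.

Definition tangent (U : vec -> Prop) (c : vec) : Prop :=
  c != 0 /\ exists u, u != 0 /\ U u /\ on_line c u /\
    forall w, w != 0 -> U w -> on_line c w -> projeq w u.

Definition pedal (U : vec -> Prop) (P : vec) (v : vec) : Prop :=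
  v != 0 /\ U v /\ exists c, tangent U c /\ on_line c P /\ on_line c v.

Definition is_arc (S : vec -> Prop) : Prop :=
  forall c u v w, c != 0 -> u != 0 -> v != 0 -> w != 0 ->
    S u -> S v -> S w -> on_line c u -> on_line c v -> on_line c w ->
    projeq u v \/ projeq u w \/ projeq v w.

(* Baer subline: image under A in PGL(3,F) of {(a,b,0) : (a,b) in F_q^2 \ 0};
   Baer pencil with vertex V (not on the line of the subline): the lines
   joining V to the points of the subline. *)
Definition on_baer_pencil (V : vec) (A : 'M[F]_3) (p : vec) : Prop :=
  exists a b : F, inFq a /\ inFq b /\ (a != 0 \/ b != 0) /\
    det3 V (pt a b 0 *m A) p = 0.

Definition lies_on_baer_pencil_linf (S : vec -> Prop) : Prop :=
  exists (V : vec) (A : 'M[F]_3),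
    V != 0 /\ on_linf V /\ A \in unitmx /\
    (forall u : vec, on_linf u -> V != u *m A) /\
    forall p, S p -> on_baer_pencil V A p.

End PG.

From HB Require Import structures.
From mathcomp Require Import all_boot all_order all_algebra.
From mathcomp Require Import ring.
From mathcomp Require Import fingroup pgroup abelian finfield.

(* Pull everything back along the collineation, so that the unital is U_ab
   and P = (a, b, 1); write B = be + be^q and N z = z^(q+1).  In characteristic
   2 the trace condition makes the form al e^2 + (al e^2)^q + B N e anisotropic,
   hence every line through an affine point (x, y, 1) of U_ab other than the
   one of slope B x^q meets U_ab again (vertical lines contain (0, 1, 0)).  So
   the feet of P are the affine points of U_ab with y - b = B x^q (x - a), and
   such a foot lies on the line joining (1, B a^q, 0) to
   (0, b - B N a + t, 1) with t = B N(x - a) in F_q: these lines form a Baer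
   pencil.  Three collinear feet with distinct x would satisfy
   x3 - x1 = s (x2 - x1) for some s in F_q (this uses al <> 0), and then
   B N(x2 - x1) s (s - 1) = 0, which is absurd. *)

Set Implicit Arguments. Unset Strict Implicit. Unset Printing Implicit Defensive.
Import GRing.Theory.
Local Open Scope ring_scope.

Lemma pchar2_of_card_sqr (F : finFieldType) (q : nat) :
  ~~ odd q -> #|F| = (q ^ 2)%N -> 2 \in [pchar F] /\ q = (2 ^ logn 2 q)%N.
Proof.
move=> q_even cardF; have [p p_pr pcharFp] := finPcharP F.
have pgroupF : (p.-group [set: F])%g by case/and3P: (fin_ring_pchar_abelem pcharFp).
have cardFp : #|F| = (p ^ logn p #|F|)%N
  by have := card_pgroup pgroupF; rewrite cardsT.
have p2 : p = 2%N.
  have : (2 %| p ^ logn p #|F|)%N by rewrite -cardFp cardF Euclid_dvdX // dvdn2 q_even.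
  by rewrite Euclid_dvdX // dvdn_prime2 // => /andP[/eqP].
subst p; split=> //.
have : (q %| 2 ^ logn 2 #|F|)%N by rewrite -cardFp cardF dvdn_exp.
by case/(dvdn_pfactor _ _ (isT : prime 2)) => m _ ->; rewrite pfactorK.
Qed.

Section Coordinates.
Variable F : finFieldType.
Implicit Types (x y z k : F) (u v w c : vec F).

Definition i0 : 'I_3 := ord0.
Definition i1 : 'I_3 := Ordinal (isT : 1 < 3)%N.
Definition i2 : 'I_3 := Ordinal (isT : 2 < 3)%N.

Lemma pt0 x y z : pt x y z 0 i0 = x. Proof. by rewrite mxE. Qed.
Lemma pt1 x y z : pt x y z 0 i1 = y. Proof. by rewrite mxE. Qed.
Lemma pt2 x y z : pt x y z 0 i2 = z. Proof. by rewrite mxE. Qed.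

Lemma vec_pt u : u = pt (u 0 i0) (u 0 i1) (u 0 i2).
Proof.
apply/rowP => -[[|[|[|j]]] lt_j3] //=; rewrite mxE ?ord1 //=;
  by congr (u _ _); apply/val_inj.
Qed.

Lemma pt_eq0 x y z : (pt x y z == 0) = [&& x == 0, y == 0 & z == 0].
Proof.
apply/eqP/and3P => [|[/eqP-> /eqP-> /eqP->]].
  move/(congr1 (fun v : vec F => [:: v 0 i0; v 0 i1; v 0 i2])).
  by rewrite pt0 pt1 pt2 !mxE => -[-> -> ->]; rewrite !eqxx.
by apply/rowP => -[[|[|[|j]]] lt_j3]; rewrite !mxE.
Qed.

Lemma pt1_neq0 x y : pt x y 1 != 0.
Proof. by rewrite pt_eq0 oner_eq0 !andbF. Qed.

Lemma linf_pt u : on_linf u = (u 0 i2 == 0).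
Proof. by rewrite /on_linf; congr (u 0 _ == 0); apply/val_inj. Qed.

Lemma scale_pt k x y z : k *: pt x y z = pt (k * x) (k * y) (k * z).
Proof. by apply/rowP => -[[|[|[|j]]] lt_j3]; rewrite !mxE. Qed.

Lemma add_pt x y z x' y' z' : pt x y z + pt x' y' z' = pt (x + x') (y + y') (z + z').
Proof. by apply/rowP => -[[|[|[|j]]] lt_j3]; rewrite !mxE. Qed.

Lemma projeq_pt1 x y x' y' k : projeq (pt x y 1) (k *: pt x' y' 1) -> x = x' /\ y = y'.
Proof.
move=> [l [_ /(congr1 (fun v : vec F => [:: v 0 i0; v 0 i1; v 0 i2]))]].
rewrite scalerA scale_pt !pt0 !pt1 !pt2 mulr1 => -[-> -> <-].
by rewrite !mul1r.
Qed.

Lemma not_projeq_pt1_pt010 x y k : ~ projeq (pt x y 1) (k *: pt 0 1 0).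
Proof.
move=> [l [_ /(congr1 (fun v : vec F => v 0 i2))]].
by rewrite scalerA scale_pt !pt2 mulr0 => /eqP; rewrite oner_eq0.
Qed.

Lemma not_projeq_pt010_pt1 x y k : ~ projeq (pt 0 1 0) (k *: pt x y 1).
Proof.
move=> [l [_ /(congr1 (fun v : vec F => (v 0 i1, v 0 i2)))]].
rewrite scalerA scale_pt !pt1 !pt2 mulr1 => -[+ lk0].
by rewrite -lk0 mul0r => /eqP; rewrite oner_eq0.
Qed.

Definition rows3 u v w : 'M[F]_3 :=
  \matrix_(i < 3, j < 3)
     (if (i : nat) == 0%N then u 0 j else if (i : nat) == 1%N then v 0 j else w 0 j).

Lemma det3_rows u v w : det3 u v w = \det (rows3 u v w). Proof. by []. Qed.

Lemma mul_rows3 u v w t : t *m rows3 u v w = t 0 i0 *: u + t 0 i1 *: v + t 0 i2 *: w.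
Proof.
apply/rowP => j; rewrite !mxE !big_ord_recl big_ord0 !mxE /= addr0 addrA.
by congr (_ * _ + t 0 _ * _ + t 0 _ * _); apply/val_inj.
Qed.

Lemma det3_pt x1 y1 z1 x2 y2 z2 x3 y3 z3 :
  det3 (pt x1 y1 z1) (pt x2 y2 z2) (pt x3 y3 z3) =
  x1 * (y2 * z3 - z2 * y3) - y1 * (x2 * z3 - z2 * x3) + z1 * (x2 * y3 - y2 * x3).
Proof.
rewrite /det3 (expand_det_row _ ord0) !big_ord_recl big_ord0 /cofactor.
rewrite !(expand_det_row _ ord0) !big_ord_recl !big_ord0 /cofactor.
by rewrite !det_mx11 !mxE /= /bump /=; ring.
Qed.

Lemma det3Zl k u v w : det3 (k *: u) v w = k * det3 u v w.
Proof. by rewrite (vec_pt u) (vec_pt v) (vec_pt w) !scale_pt !det3_pt; ring. Qed.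

Lemma det3Zm k u v w : det3 u (k *: v) w = k * det3 u v w.
Proof. by rewrite (vec_pt u) (vec_pt v) (vec_pt w) !scale_pt !det3_pt; ring. Qed.

Lemma det3Zr k u v w : det3 u v (k *: w) = k * det3 u v w.
Proof. by rewrite (vec_pt u) (vec_pt v) (vec_pt w) !scale_pt !det3_pt; ring. Qed.

Lemma on_lineE c u :
  on_line c u = (c 0 i0 * u 0 i0 + c 0 i1 * u 0 i1 + c 0 i2 * u 0 i2 == 0).
Proof.
rewrite /on_line !big_ord_recl big_ord0 addr0 addrA.
by congr (_ * _ + c 0 _ * u 0 _ + c 0 _ * u 0 _ == 0); apply/val_inj.
Qed.

Lemma det3_eq0_on_line c u v w : c != 0 ->
  on_line c u -> on_line c v -> on_line c w -> det3 u v w = 0.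
Proof.
move=> c0 cu cv cw; apply/eqP; rewrite det3_rows -det_tr.
apply/det0P; exists c => //; apply/rowP => i; rewrite !mxE.
under eq_bigr => j _ do rewrite !mxE.
by case: i => [[|[|[|i]]] lt_i3] //=; apply/eqP.
Qed.

Lemma projeq_sym u v : projeq u v -> projeq v u.
Proof.
move=> [k [k0 ->]]; exists k^-1; split; first by rewrite invr_eq0.
by rewrite scalerA mulVf ?scale1r.
Qed.

Lemma projeq_trans u v w : projeq u v -> projeq v w -> projeq u w.
Proof.
move=> [k [k0 ->]] [l [l0 ->]]; exists (k * l).
by rewrite scalerA mulf_neq0.
Qed.

Lemma projeq_of_scale_add_eq0 a b u v : u != 0 -> v != 0 ->
  (a != 0) || (b != 0) -> a *: u + b *: v = 0 -> projeq u v.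
Proof.
move=> u0 v0 ab0 /eqP; rewrite addr_eq0 => /eqP abuv.
have [a0|a0] := eqVneq a 0.
  move: abuv ab0; rewrite a0 scale0r => /esym/eqP.
  by rewrite oppr_eq0 scaler_eq0 (negbTE v0) orbF => /eqP->; rewrite eqxx.
exists (- b / a); split.
  rewrite mulf_neq0 ?invr_eq0 // oppr_eq0; apply: contra u0 => /eqP b0.
  by move: abuv; rewrite b0 scale0r oppr0 => /eqP; rewrite scaler_eq0 (negbTE a0).
by rewrite mulrC -scalerA scaleNr -abuv scalerA mulVf ?scale1r.
Qed.

Lemma on_line_of_det3_eq0 c u v w : on_line c u -> on_line c v ->
  u != 0 -> v != 0 -> ~ projeq u v -> det3 u v w = 0 -> on_line c w.
Proof.
move=> cu cv u0 v0 not_uv /eqP; rewrite det3_rows => /det0P[t t0].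
rewrite mul_rows3 => dep.
have t2 : t 0 i2 != 0.
  apply/eqP => t20; apply: not_uv.
  have dep2 : t 0 i0 *: u + t 0 i1 *: v = 0 by rewrite -dep t20 scale0r addr0.
  apply: (projeq_of_scale_add_eq0 u0 v0 _ dep2); apply: contraNT t0.
  rewrite negb_or !negbK => /andP[/eqP t00 /eqP t10].
  by rewrite (vec_pt t) t00 t10 t20 pt_eq0 !eqxx.
pose lv (r : vec F) := c 0 i0 * r 0 i0 + c 0 i1 * r 0 i1 + c 0 i2 * r 0 i2.
have lv_dep : lv (t 0 i0 *: u + t 0 i1 *: v + t 0 i2 *: w) =
    t 0 i0 * lv u + t 0 i1 * lv v + t 0 i2 * lv w by rewrite /lv !mxE; ring.
move: cu cv lv_dep; rewrite !on_lineE -/(lv u) -/(lv v) -/(lv w) dep.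
move=> /eqP-> /eqP->; rewrite /lv !mxE !mulr0 !addr0 !add0r => /esym/eqP.
by rewrite mulf_eq0 (negbTE t2).
Qed.
End Coordinates.

Section Collineation.
Variables (F : finFieldType) (sigma : {rmorphism F -> F}) (A : 'M[F]_3).
Hypothesis A_unit : A \in unitmx.
Implicit Types (x y z k : F) (u v w : vec F).
Local Notation f := (collin sigma A).

Definition sigma_inv : F -> F := invF (fmorph_inj sigma).

Lemma sigma_invK x : sigma (sigma_inv x) = x. Proof. exact: f_invF. Qed.

Lemma sigma_inv_eq0 x : (sigma_inv x == 0) = (x == 0).
Proof. by rewrite -(fmorph_eq0 sigma) sigma_invK. Qed.

Lemma map_sigma_invK m n (B : 'M[F]_(m, n)) : map_mx sigma (map_mx sigma_inv B) = B.
Proof. by apply/matrixP => i j; rewrite !mxE sigma_invK. Qed.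

Lemma map_pt x y z : map_mx sigma (pt x y z) = pt (sigma x) (sigma y) (sigma z).
Proof. by apply/rowP => -[[|[|[|j]]] lt_j3]; rewrite !mxE ?rmorph0. Qed.

Lemma collinZ k u : f (k *: u) = sigma k *: f u.
Proof. by rewrite /collin map_mxZ scalemxAl. Qed.

Lemma collin_mul u (B : 'M[F]_3) : f (u *m B) = map_mx sigma u *m (map_mx sigma B *m A).
Proof. by rewrite /collin map_mxM mulmxA. Qed.

Lemma collin0 : f 0 = 0. Proof. by rewrite /collin map_mx0 mul0mx. Qed.

Lemma collin_inj : injective f.
Proof.
move=> u v /(can_inj (mulmxK A_unit)) /rowP eq_uv; apply/rowP => j.
by apply: (fmorph_inj sigma); have := eq_uv j; rewrite !mxE.
Qed.

Lemma collin_eq0 u : (f u == 0) = (u == 0).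
Proof.
by apply/eqP/eqP => [fu0 | ->]; [apply: collin_inj; rewrite fu0 | ]; rewrite collin0.
Qed.

Lemma collin_onto w : exists u, w = f u.
Proof.
by exists (map_mx sigma_inv (w *m invmx A)); rewrite /collin map_sigma_invK mulmxKV.
Qed.

Lemma projeq_collin u v : projeq (f u) (f v) <-> projeq u v.
Proof.
split=> [[k [k0 fu]] | [k [k0 ->]]]; last first.
  by exists (sigma k); rewrite fmorph_eq0 k0 collinZ.
exists (sigma_inv k); rewrite sigma_inv_eq0 k0.
by split=> //; apply: collin_inj; rewrite collinZ sigma_invK.
Qed.

Lemma map_rows3 u v w :
  map_mx sigma (rows3 u v w) = rows3 (map_mx sigma u) (map_mx sigma v) (map_mx sigma w).
Proof.
by apply/matrixP => i j; rewrite !mxE; case: ifP => _; rewrite ?mxE //; case: ifP; rewrite ?mxE.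
Qed.

Lemma rows3_collin u v w : rows3 (f u) (f v) (f w) = map_mx sigma (rows3 u v w) *m A.
Proof.
rewrite map_rows3; apply/matrixP => i j; rewrite /collin [LHS]mxE [RHS]mxE.
case: ifP => i0; [|case: ifP => i1]; rewrite mxE; apply: eq_bigr => k _;
  by rewrite [in RHS]mxE ?i0 ?i1.
Qed.

Lemma det3_collin u v w : det3 (f u) (f v) (f w) = sigma (det3 u v w) * \det A.
Proof. by rewrite !det3_rows rows3_collin det_mulmx det_map_mx. Qed.

Lemma det3_collin_eq0 u v w : (det3 (f u) (f v) (f w) == 0) = (det3 u v w == 0).
Proof.
have detA : \det A != 0 by rewrite -unitfE -unitmxE.
by rewrite det3_collin mulf_eq0 fmorph_eq0 (negbTE detA) orbF.
Qed.

Lemma collin_affine_preimage P : fixes_linf f -> ~~ on_linf P ->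
  exists c a b, c != 0 /\ P = f (c *: pt a b 1).
Proof.
move=> f_linf; have [P0 ->] := collin_onto P => P_affine.
have P0_2 : P0 0 i2 != 0.
  apply: contra P_affine; rewrite -linf_pt => P0_linf.
  have [-> | P0_neq0] := eqVneq P0 0; last exact: f_linf.
  by rewrite collin0 linf_pt mxE.
exists (P0 0 i2), (P0 0 i0 / P0 0 i2), (P0 0 i1 / P0 0 i2); split=> //.
by rewrite {1}(vec_pt P0) scale_pt ![P0 0 i2 * _]mulrC !divfK // mul1r.
Qed.

Lemma inFq_sigma q x : inFq q (sigma x) = inFq q x.
Proof. by rewrite /inFq -rmorphXn (inj_eq (fmorph_inj sigma)). Qed.

Lemma lies_on_baer_pencil_linf_collin q (S0 S : vec F -> Prop) :
  fixes_linf f -> lies_on_baer_pencil_linf q S0 ->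
  (forall p, S p -> exists2 p0, S0 p0 & p = f p0) -> lies_on_baer_pencil_linf q S.
Proof.
move=> f_linf [V [B [V0 [V_linf [B_unit [V_off pencil]]]]]] S_S0.
exists (f V), (map_mx sigma B *m A); split; [|split; [|split; [|split]]].
- by rewrite collin_eq0.
- exact: f_linf.
- by rewrite unitmx_mul map_unitmx B_unit.
- move=> u u_linf; apply/eqP; rewrite /collin mulmxA => /(can_inj (mulmxK A_unit)).
  rewrite -[u]map_sigma_invK -map_mxM => /map_mx_inj; apply/eqP/V_off.
  by move: u_linf; rewrite !linf_pt mxE => /eqP->; rewrite sigma_inv_eq0.
- move=> _ /S_S0[p0 /pencil[a [b [a_q [b_q [ab0 det0]]]]] ->].
  exists (sigma a), (sigma b); rewrite !inFq_sigma !fmorph_eq0.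
  split=> //; split=> //; split=> //.
  by rewrite -(rmorph0 sigma) -map_pt -collin_mul det3_collin det0 rmorph0 mul0r.
Qed.
End Collineation.

Section Frobenius.
Variables (F : finFieldType) (q : nat).
Hypothesis pcharF2 : 2 \in [pchar F].
Hypothesis q_pow2 : q = (2 ^ logn 2 q)%N.
Hypothesis cardF : #|F| = (q ^ 2)%N.
Local Notation "x ^q" := (x ^+ q) (at level 2, format "x ^q").

Lemma q_gt0 : (0 < q)%N. Proof. by rewrite q_pow2 expn_gt0. Qed.

Lemma pchar_nat_exp2 n : [pchar F].-nat (2 ^ n)%N.
Proof. by rewrite pnatX (pnatE _ (isT : prime 2)) pcharF2. Qed.

Lemma frobD (x y : F) : (x + y)^q = x^q + y^q.
Proof. by rewrite exprDn_pchar // q_pow2 pchar_nat_exp2. Qed.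

Lemma frobM (x y : F) : (x * y)^q = x^q * y^q. Proof. exact: exprMn. Qed.
Lemma frobV (x : F) : (x^-1)^q = (x^q)^-1. Proof. exact: exprVn. Qed.
Lemma frobN (x : F) : (- x)^q = - x^q. Proof. by rewrite !(oppr_pchar2 pcharF2). Qed.
Lemma frobB (x y : F) : (x - y)^q = x^q - y^q. Proof. by rewrite frobD frobN. Qed.
Lemma frobX (x : F) n : (x ^+ n)^q = x^q ^+ n. Proof. exact: exprAC. Qed.
Lemma frob1 : (1 : F)^q = 1. Proof. exact: expr1n. Qed.
Lemma frob0 : (0 : F)^q = 0. Proof. by rewrite expr0n eqn0Ngt q_gt0. Qed.
Lemma frobK (x : F) : x^q^q = x.
Proof. by rewrite -exprM mulnn -cardF expf_card. Qed.
Lemma frob_eq0 (x : F) : (x^q == 0) = (x == 0).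
Proof. by rewrite expf_eq0 q_gt0. Qed.

Lemma sqrD_pchar2 (x y : F) : (x + y) ^+ 2 = x ^+ 2 + y ^+ 2.
Proof. by rewrite sqrrD (mulrn_pchar pcharF2) addr0. Qed.

Definition frobE := (frobD, frobB, frobN, frobM, frobV, frobX, frob1, frob0, frobK).

Lemma inFqE (x : F) : inFq q x = (x^q + x == 0).
Proof. by rewrite /inFq -subr_eq0 (GRing.subr_pchar2 pcharF2). Qed.

Lemma inFq0 : inFq q (0 : F). Proof. by rewrite /inFq frob0. Qed.
Lemma inFq1 : inFq q (1 : F). Proof. by rewrite /inFq frob1. Qed.

Lemma sqrf_pchar2_inj : injective (fun x : F => x ^+ 2).
Proof. by move=> x y /=; rewrite -!(pFrobenius_autE pcharF2); apply: fmorph_inj. Qed.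

Lemma inFqB (x y : F) : inFq q x -> inFq q y -> inFq q (x - y).
Proof. by rewrite /inFq frobB => /eqP-> /eqP->. Qed.

Lemma inFq_div (x y : F) : inFq q x -> inFq q y -> inFq q (x / y).
Proof. by rewrite /inFq frobM frobV => /eqP-> /eqP->. Qed.

Lemma inFq_sqr (x : F) : inFq q (x ^+ 2) -> inFq q x.
Proof. by rewrite /inFq frobX => /eqP/sqrf_pchar2_inj->. Qed.

Lemma abstrace_sqr_add (u : F) : abstrace q (u ^+ 2 + u) = u^q + u.
Proof.
have sum_tele : \sum_(i < logn 2 q) (u ^+ 2 + u) ^+ (2 ^ i) =
                \sum_(0 <= i < logn 2 q) (u ^+ (2 ^ i.+1) - u ^+ (2 ^ i)).
  rewrite big_mkord; apply: eq_bigr => i _.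
  rewrite exprDn_pchar ?pchar_nat_exp2 // -exprM -expnS.
  by rewrite (GRing.subr_pchar2 pcharF2) addrC.
by rewrite /abstrace sum_tele telescope_sumr // -q_pow2 expr1 (GRing.subr_pchar2 pcharF2).
Qed.

Section OrthogonalBM.
Variables al be : F.
Hypothesis be_notFq : ~~ inFq q be.
Hypothesis trace0 : abstrace q (al ^+ q.+1 / (be ^+ q + be) ^+ 2) = 0.
Implicit Types (a b k m x y r s : F) (p v w : vec F).
Local Notation B := (be + be^q).
Local Notation U0 := (U_ab q al be).

Lemma frob_B : B^q = B. Proof. by rewrite !frobE addrC. Qed.

Lemma B_neq0 : B != 0.
Proof. by apply: contra be_notFq; rewrite inFqE addrC. Qed.

Definition orthBM_form e : F := al * e ^+ 2 + al^q * e^q ^+ 2 + B * (e * e^q).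
Local Notation Q := orthBM_form.

(* If the form vanished at e, then u := al e^2 / (B e^(q+1)) would satisfy
   u + u^q = 1 and u u^q = al^(q+1) / B^2, whose trace is then
   abstrace (u^2 + u) = u^q + u = 1. *)
Lemma orthBM_form_neq0 e : e != 0 -> Q e != 0.
Proof.
move=> e0; apply/negP; rewrite /orthBM_form => /eqP form0.
have eq0 : e^q != 0 by rewrite frob_eq0.
pose u := al * e ^+ 2 / (B * (e * e^q)).
have frob_u : u^q = al^q * e^q ^+ 2 / (B * (e * e^q)).
  by rewrite /u !frobE [be^q + be]addrC [e^q * e]mulrC.
have u_add : u + u^q = 1.
  rewrite frob_u /u -mulrDl.
  have -> : al * e ^+ 2 + al^q * e^q ^+ 2 = B * (e * e^q).
    by rewrite -[RHS](oppr_pchar2 pcharF2); apply/eqP; rewrite -subr_eq0 opprK form0.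
  by rewrite divff // !mulf_neq0 ?B_neq0.
have u_mul : u * u^q = al ^+ q.+1 / (be^q + be) ^+ 2.
  rewrite frob_u /u [be^q + be]addrC (exprS al).
  by move: (al^q) (e^q) eq0 => alq eq eq0; field; rewrite B_neq0 e0 eq0.
have frob_u1 : u^q = u + 1 by rewrite -u_add (addKr_pchar2 pcharF2).
move: trace0; rewrite -u_mul frob_u1 mulrDr mulr1 -expr2 abstrace_sqr_add.
by rewrite frob_u1 addrAC (addrr_pchar2 pcharF2) add0r => /eqP; rewrite oner_eq0.
Qed.

Lemma orthBM_form_frob e : (Q e)^q = Q e.
Proof.
rewrite /orthBM_form !frobE.
by move: (e^q) (al^q) (be^q) => eq alq beq; ring.
Qed.

Lemma orthBM_formZ l e : inFq q l -> Q (l * e) = l ^+ 2 * Q e.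
Proof.
rewrite /inFq => /eqP l_q; rewrite /orthBM_form !frobE l_q.
by move: (e^q) (al^q) (be^q) => eq alq beq; ring.
Qed.

(* The root is s = l e with e = be / rho and l = B / Q e in F_q: then
   rho s + (rho s)^q = l B = l^2 Q e = Q s. *)
Lemma orthBM_secant_root rho : rho != 0 ->
  exists2 s, s != 0 & rho * s + (rho * s)^q + Q s = 0.
Proof.
move=> rho0; pose e := be / rho.
have be0 : be != 0 by apply: contra be_notFq => /eqP->; rewrite inFqE frobE addr0.
have e0 : e != 0 by rewrite mulf_neq0 ?invr_eq0.
have Qe0 : Q e != 0 := orthBM_form_neq0 e0.
pose l := B / Q e.
have l_q : inFq q l.
  by rewrite /inFq frobM frobV orthBM_form_frob frob_B.
exists (l * e); first by rewrite mulf_neq0 ?mulf_neq0 ?invr_eq0 ?B_neq0.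
have rho_e : rho * e = be by rewrite mulrC divfK.
have lQ : l * Q e = B by rewrite divfK.
rewrite orthBM_formZ // mulrCA rho_e frobM (eqP l_q) -mulrDr.
by rewrite expr2 -mulrA lQ (addrr_pchar2 pcharF2).
Qed.

Definition level x y : F := y - al * x ^+ 2 - be * x ^+ q.+1.

Lemma U_ab_pt x y : inFq q (level x y) -> U0 (pt x y 1).
Proof.
move=> level_q; left; exists x, (level x y); split=> //.
by exists 1; rewrite oner_neq0 scale1r /level; split=> //; congr pt; ring.
Qed.

Lemma U_ab_scale k v : k != 0 -> U0 v -> U0 (k *: v).
Proof.
move=> k0 [[x [r [r_q [l [l0 ->]]]]] | [l [l0 ->]]].
  by left; exists x, r; split=> //; exists (k * l); rewrite mulf_neq0 ?scalerA.
by right; exists (k * l); rewrite mulf_neq0 ?scalerA.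
Qed.

Lemma level_shift x y s t :
  level (x + s) (y + t) = level x y + t + al * s ^+ 2 + be * (x * s^q + s * x^q + s * s^q).
Proof.
rewrite /level sqrD_pchar2 !(exprS _ q) frobD.
rewrite !(GRing.subr_pchar2 pcharF2).
by move: (x^q) (s^q) => xq sq; ring.
Qed.

Lemma secant_level x y m : inFq q (level x y) -> m + B * x^q != 0 ->
  exists2 s, s != 0 & inFq q (level (x + s) (y + m * s)).
Proof.
rewrite inFqE => /eqP level_q /orthBM_secant_root[s s0 root]; exists s => //.
rewrite inFqE level_shift; move: (level x y) level_q => L level_q.
apply/eqP; rewrite -(addr0 0) -{1}level_q -root /orthBM_form !frobE.
by move: (L^q) (x^q) (s^q) (m^q) (al^q) (be^q) => Lq xq sq mq alq beq; ring.
Qed.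

(* The tangent to U_ab at an affine point (x, y, 1) is the line of slope
   B x^q through it. *)
Definition is_foot a b x y : Prop := inFq q (level x y) /\ y - b = B * x^q * (x - a).

Definition feet a b p : Prop :=
  exists k x y, [/\ k != 0, p = k *: pt x y 1 & is_foot a b x y].

Lemma tangent_point_foot a b p : U0 p ->
  (forall w, w != 0 -> U0 w -> det3 (pt a b 1) p w = 0 -> projeq w p) -> feet a b p.
Proof.
have U_on_curve z : U0 (pt z (al * z ^+ 2 + be * z ^+ q.+1) 1).
  apply: U_ab_pt; have -> : level z (al * z ^+ 2 + be * z ^+ q.+1) = 0.
    by rewrite /level; ring.
  exact: inFq0.
case=> [[x [r [r_q [k [k0 ->]]]]] | [k [k0 ->]]] tangent; last first.
  exfalso; apply: (@not_projeq_pt1_pt010 _ a _ k).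
  apply: tangent (pt1_neq0 _ _) (U_on_curve a) _.
  by rewrite det3Zm det3_pt; ring.
set y := al * x ^+ 2 + be * x ^+ q.+1 + r in tangent *.
have level_q : inFq q (level x y) by rewrite [level _ _](_ : _ = r) // /level /y; ring.
have x_a : x != a.
  apply/eqP => xa; apply: (@not_projeq_pt010_pt1 _ x y k); apply: tangent.
  - by rewrite pt_eq0 oner_eq0 andbF.
  - by right; exists 1; rewrite oner_neq0 scale1r.
  - by rewrite det3Zm det3_pt xa; ring.
exists k, x, y; split=> //; split=> //.
pose m := (y - b) / (x - a).
have slope : y - b = m * (x - a) by rewrite divfK // subr_eq0.
rewrite slope; congr (_ * _); apply/eqP; apply: contraT => m_tangent.
have m_secant : m + B * x^q != 0 by rewrite -(GRing.subr_pchar2 pcharF2) subr_eq0.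
have [s s0 level_s] := secant_level level_q m_secant.
have on_line_s : det3 (pt a b 1) (k *: pt x y 1) (pt (x + s) (y + m * s) 1) = 0.
  have -> : y = b + m * (x - a) by rewrite -slope addrC subrK.
  by rewrite det3Zm det3_pt; ring.
have /projeq_pt1[/eqP] := tangent _ (pt1_neq0 _ _) (U_ab_pt level_s) on_line_s.
by rewrite -{2}[x]addr0 (inj_eq (addrI x)) (negbTE s0).
Qed.

Definition pencil_coord a x : F := B * ((x - a) * (x - a)^q).

Lemma pencil_coord_inFq a x : inFq q (pencil_coord a x).
Proof.
rewrite /inFq /pencil_coord !frobE.
by apply/eqP; move: (x^q) (a^q) (be^q) => xq aq beq; ring.
Qed.

Lemma foot_y a b x y : is_foot a b x y ->
  y = b - B * (a * a^q) + B * a^q * x + pencil_coord a x.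
Proof.
move=> [_ slope]; rewrite -[y](subrK b) slope /pencil_coord !frobE.
by move: (x^q) (a^q) (be^q) => xq aq beq; ring.
Qed.

Lemma foot_trace a b x y : is_foot a b x y ->
  al * x ^+ 2 + al^q * x^q ^+ 2 = b + b^q - B * (a * a^q) + pencil_coord a x.
Proof.
move=> foot; have y_def := foot_y foot; case: foot => + _.
rewrite inFqE => /eqP level0; apply/eqP; rewrite -subr_eq0 -oppr_eq0 -level0.
rewrite y_def /level /pencil_coord !(exprS _ q) !frobE.
by apply/eqP; move: (x^q) (a^q) (al^q) (be^q) (b^q) => xq aq alq beq bq; ring.
Qed.

Lemma feet_same_x a b k k' x y y' : k != 0 -> k' != 0 ->
  is_foot a b x y -> is_foot a b x y' -> projeq (k *: pt x y 1) (k' *: pt x y' 1).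
Proof.
move=> k0 k'0 /foot_y-> /foot_y->; exists (k / k').
by rewrite scalerA divfK // mulf_neq0 ?invr_eq0.
Qed.

Lemma det3_feet a b x1 y1 x2 y2 x3 y3 :
  is_foot a b x1 y1 -> is_foot a b x2 y2 -> is_foot a b x3 y3 ->
  det3 (pt x1 y1 1) (pt x2 y2 1) (pt x3 y3 1) =
  (x2 - x1) * (pencil_coord a x3 - pencil_coord a x1)
  - (x3 - x1) * (pencil_coord a x2 - pencil_coord a x1).
Proof.
move=> /foot_y-> /foot_y-> /foot_y->; rewrite det3_pt.
by move: (pencil_coord a _) (pencil_coord a _) (pencil_coord a _) => z1 z2 z3; ring.
Qed.

Definition pencil_vertex a : vec F := pt 1 (B * a^q) 0.

Definition pencil_base a b : 'M[F]_3 :=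
  rows3 (pt 0 (b - B * (a * a^q)) 1) (pt 0 1 0) (pt 1 0 0).

Lemma feet_on_baer_pencil a b : lies_on_baer_pencil_linf q (feet a b).
Proof.
exists (pencil_vertex a), (pencil_base a b); split; [|split; [|split; [|split]]].
- by rewrite pt_eq0 oner_eq0.
- by rewrite linf_pt pt2.
- rewrite unitmxE unitfE -det3_rows det3_pt.
  by rewrite (_ : _ - _ + _ = -1) ?oppr_eq0 ?oner_eq0 //; ring.
- move=> u; rewrite linf_pt => /eqP u2; apply/eqP.
  rewrite /pencil_base mul_rows3 !scale_pt !add_pt u2.
  move/(congr1 (fun v : vec F => v 0 i0)); rewrite !pt0 !mulr0 mulr1 !add0r.
  by move/eqP; rewrite oner_eq0.
- move=> _ [k [x [y [_ -> foot]]]]; exists 1, (pencil_coord a x).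
  split; first by rewrite /inFq frobE.
  split; first exact: pencil_coord_inFq.
  split; first by left; rewrite oner_neq0.
  rewrite det3Zr /pencil_base mul_rows3 !pt0 !pt1 !pt2 !scale_pt !add_pt det3_pt.
  rewrite (foot_y foot).
  by move: (pencil_coord a x) => z; ring.
Qed.

Lemma inFq_al_sqr_sub x x' :
  al * x ^+ 2 + al^q * x^q ^+ 2 = al * x' ^+ 2 + al^q * x'^q ^+ 2 ->
  inFq q (al * (x - x') ^+ 2).
Proof.
move=> g_eq; rewrite inFqE (GRing.subr_pchar2 pcharF2) !frobE !sqrD_pchar2.
have -> : al^q * (x^q ^+ 2 + x'^q ^+ 2) + al * (x ^+ 2 + x' ^+ 2) =
  (al * x ^+ 2 + al^q * x^q ^+ 2) + (al * x' ^+ 2 + al^q * x'^q ^+ 2) by ring.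
by rewrite g_eq (addrr_pchar2 pcharF2).
Qed.

Lemma norm_add_scaled u d s : inFq q s ->
  (u + s * d) * (u + s * d)^q = u * u^q + s * (u * d^q + u^q * d) + s ^+ 2 * (d * d^q).
Proof.
rewrite /inFq => /eqP s_q; rewrite !frobE s_q.
by move: (u^q) (d^q) => uq dq; ring.
Qed.

(* If the pencil coordinates of the feet coincide, their traces force
   al (x_i - x1)^2 into F_q; dividing by al is where al <> 0 is needed. *)
Lemma feet_ratio_inFq a b x1 y1 x2 y2 x3 y3 : al != 0 ->
  is_foot a b x1 y1 -> is_foot a b x2 y2 -> is_foot a b x3 y3 -> x2 != x1 ->
  (x2 - x1) * (pencil_coord a x3 - pencil_coord a x1) =
    (x3 - x1) * (pencil_coord a x2 - pencil_coord a x1) ->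
  inFq q ((x3 - x1) / (x2 - x1)).
Proof.
move=> al0 foot1 foot2 foot3 x21 collinear.
have d0 : x2 - x1 != 0 by rewrite subr_eq0.
have [z21|z21] := eqVneq (pencil_coord a x2) (pencil_coord a x1); last first.
  rewrite (_ : _ / _ = (pencil_coord a x3 - pencil_coord a x1) /
                       (pencil_coord a x2 - pencil_coord a x1)).
    by apply: inFq_div; apply: inFqB; apply: pencil_coord_inFq.
  by apply/eqP; rewrite eqr_div ?subr_eq0 // -collinear mulrC.
have z31 : pencil_coord a x3 = pencil_coord a x1.
  move: collinear; rewrite z21 subrr mulr0 => /eqP.
  by rewrite mulf_eq0 (negbTE d0) subr_eq0 => /eqP.
have al_d2 : inFq q (al * (x2 - x1) ^+ 2).
  by apply: inFq_al_sqr_sub; rewrite (foot_trace foot2) (foot_trace foot1) z21.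
have al_d3 : inFq q (al * (x3 - x1) ^+ 2).
  by apply: inFq_al_sqr_sub; rewrite (foot_trace foot3) (foot_trace foot1) z31.
apply: inFq_sqr; rewrite (_ : _ ^+ 2 = al * (x3 - x1) ^+ 2 / (al * (x2 - x1) ^+ 2)).
  exact: inFq_div.
by field; rewrite al0 d0.
Qed.

Lemma feet_distinct_x_not_collinear a b x1 y1 x2 y2 x3 y3 : al != 0 ->
  is_foot a b x1 y1 -> is_foot a b x2 y2 -> is_foot a b x3 y3 ->
  x1 != x2 -> x1 != x3 -> x2 != x3 ->
  det3 (pt x1 y1 1) (pt x2 y2 1) (pt x3 y3 1) != 0.
Proof.
move=> al0 foot1 foot2 foot3 x12 x13 x23; rewrite (det3_feet foot1 foot2 foot3).
rewrite subr_eq0; apply/eqP => collinear.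
have x21 : x2 != x1 by rewrite eq_sym.
move: collinear; set d := x2 - x1 => collinear.
have d0 : d != 0 by rewrite subr_eq0.
have := feet_ratio_inFq al0 foot1 foot2 foot3 x21 collinear.
set s := (x3 - x1) / d => s_q.
have x31 : x3 - x1 = s * d by rewrite /s divfK.
clearbody s.
have x3E : x3 - a = (x1 - a) + s * d by rewrite -x31; ring.
have x2E : x2 - a = (x1 - a) + 1 * d by rewrite /d; ring.
have zs : pencil_coord a x3 - pencil_coord a x1 = s * (pencil_coord a x2 - pencil_coord a x1).
  by apply: (mulfI d0); rewrite collinear x31 -mulrA mulrCA.
have : pencil_coord a x3 - pencil_coord a x1 - s * (pencil_coord a x2 - pencil_coord a x1) =
    B * (d * d^q) * (s * (s - 1)).
  rewrite /pencil_coord x3E x2E !norm_add_scaled ?inFq1 //.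
  by move: (x1 - a) ((x1 - a)^q) (d^q) => u uq dq; ring.
rewrite zs subrr => /esym/eqP; rewrite !mulf_eq0 (negbTE B_neq0) (negbTE d0) frob_eq0.
rewrite (negbTE d0) subr_eq0 /= => /orP[/eqP s0 | /eqP s1].
  by move: x31 x13; rewrite s0 mul0r => /eqP; rewrite subr_eq0 eq_sym => ->.
by move: x31 x23; rewrite s1 mul1r => /addIr->; rewrite eqxx.
Qed.

Lemma feet_collinear_projeq a b p1 p2 p3 : al != 0 ->
  feet a b p1 -> feet a b p2 -> feet a b p3 -> det3 p1 p2 p3 = 0 ->
  projeq p1 p2 \/ projeq p1 p3 \/ projeq p2 p3.
Proof.
move=> al0 [k1 [x1 [y1 [k10 -> foot1]]]] [k2 [x2 [y2 [k20 -> foot2]]]]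
  [k3 [x3 [y3 [k30 -> foot3]]]] det0.
have [x12|x12] := eqVneq x1 x2.
  by subst x2; left; exact: (feet_same_x k10 k20 foot1 foot2).
have [x13|x13] := eqVneq x1 x3.
  by subst x3; right; left; exact: (feet_same_x k10 k30 foot1 foot3).
have [x23|x23] := eqVneq x2 x3.
  by subst x3; right; right; exact: (feet_same_x k20 k30 foot2 foot3).
move: det0; rewrite det3Zl det3Zm det3Zr => /eqP.
rewrite !mulf_eq0 (negbTE k10) (negbTE k20) (negbTE k30) /=.
by rewrite (negbTE (feet_distinct_x_not_collinear al0 foot1 foot2 foot3 x12 x13 x23)).
Qed.

Section Pedal.
Variables (sigma : {rmorphism F -> F}) (A : 'M[F]_3).
Hypothesis A_unit : A \in unitmx.
Local Notation f := (collin sigma A).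
Variable U : vec F -> Prop.
Hypothesis U_image : forall w, U w <-> exists v, U0 v /\ w = f v.
Variables (c a b : F) (P : vec F).
Hypothesis c0 : c != 0.
Hypothesis P_def : P = f (c *: pt a b 1).
Hypothesis P_notU : ~ U P.

Lemma U_scale k w : k != 0 -> U w -> U (k *: w).
Proof.
move=> k0 /U_image[v [Uv ->]]; apply/U_image; exists (sigma_inv sigma k *: v).
by rewrite collinZ sigma_invK; split=> //; apply: U_ab_scale; rewrite ?sigma_inv_eq0.
Qed.

Lemma pedal_feet p : pedal U P p -> exists2 p0, feet a b p0 & p = f p0.
Proof.
move=> [p_neq0 [Up [l [[l0 [u [u0 [Uu [lu tangent]]]]] [lP lp]]]]].
have [p0 [Up0 p_def]] := (U_image p).1 Up; exists p0 => //.
apply: tangent_point_foot => // w w0 Uw det0.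
have Ufw : U (f w) by apply/U_image; exists w.
have P_neq0 : P != 0 by rewrite P_def collin_eq0 // scaler_eq0 negb_or c0 pt1_neq0.
have not_Pp : ~ projeq P p.
  by move=> [k [k0 P_kp]]; apply: P_notU; rewrite P_kp; apply: U_scale.
have lw : on_line l (f w).
  apply: on_line_of_det3_eq0 lP lp P_neq0 p_neq0 not_Pp _.
  by apply/eqP; rewrite P_def p_def det3_collin_eq0 // det3Zl det0 mulr0.
apply/(projeq_collin sigma A_unit); rewrite -p_def.
apply: projeq_trans (tangent _ _ Ufw lw) (projeq_sym (tangent _ p_neq0 Up lp)).
by rewrite collin_eq0.
Qed.

Lemma pedal_on_baer_pencil : fixes_linf f -> lies_on_baer_pencil_linf q (pedal U P).
Proof.
move=> f_linf; apply: (lies_on_baer_pencil_linf_collin A_unit f_linf _ pedal_feet).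
exact: feet_on_baer_pencil.
Qed.

Lemma pedal_arc : al != 0 -> is_arc (pedal U P).
Proof.
move=> al0 l u v w l0 _ _ _ pu pv pw lu lv lw.
have := det3_eq0_on_line l0 lu lv lw.
have [u0 feet_u ->] := pedal_feet pu.
have [v0 feet_v ->] := pedal_feet pv.
have [w0 feet_w ->] := pedal_feet pw.
rewrite !(projeq_collin sigma A_unit) => /eqP; rewrite det3_collin_eq0 // => /eqP.
exact: (feet_collinear_projeq al0 feet_u feet_v feet_w).
Qed.

End Pedal.
End OrthogonalBM.
End Frobenius.

Theorem theorem1p7 (F : finFieldType) (q : nat)
  (hq : ~~ odd q) (hF : #|F| = (q ^ 2)%N)
  (U : vec F -> Prop) (hU : nonclassical_orthBM q U)
  (P : vec F) (hP0 : P != 0) (hPU : ~ U P) (hPl : ~~ on_linf P) :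
  lies_on_baer_pencil_linf q (pedal U P) /\ is_arc (pedal U P).
Proof.
have [pcharF2 q_pow2] := pchar2_of_card_sqr hq hF.
have [al [be [sigma [A [[be_notFq trace0] [al0 [A_unit [f_linf U_image]]]]]]]] := hU.
have [c [a [b [c0 P_def]]]] := collin_affine_preimage A_unit f_linf hPl.
split.
  exact: (pedal_on_baer_pencil pcharF2 q_pow2 hF be_notFq trace0 A_unit U_image
            c0 P_def hPU f_linf).
exact: (pedal_arc pcharF2 q_pow2 hF be_notFq trace0 A_unit U_image c0 P_def hPU al0).
Qed.
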